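(* Let $k\ge 2$ and let $G$ be a $k$-tree. Then every vertex of $G$ has mindegree at least $k-1$. Moreover, $G$ has at least $k+1$ vertices of mindegree exactly $k-1$, unless $G$ is isomorphic to the symmetric complete graph $\overleftrightarrow{K}_k$ or $G$ is a symmetric path of odd length (in which case $k=2$).
   Context: Digraphs have no loops and no parallel arcs, but may contain digons. $d_{min}(v)=\min(d^+(v),d^-(v))$ is the mindegree of $v$; $\Delta_{max}(G)=\max_v\max(d^+(v),d^-(v))$. A symmetric cycle / complete graph / path is obtained from the corresponding undirected graph by replacing each edge by a digon. $\mathcal B_1$ is the set of directed cycles (including digons), $\mathcal B_2$ the set of symmetric cycles of odd length, and for $j\ge 3$, $\mathcal B_j=\{\overleftrightarrow K_{j+1}\}$ (all up to isomorphism). A digraph $G$ is a direct composition of digraphs $G_1,G_2$ on vertices $v_1\in V(G_1)$, $v_2\in V(G_2)$ if it is obtained from the disjoint union of $G_1$ and $G_2$ by adding exactly one arc between $v_1$ and $v_2$ (either $v_1v_2$ or $v_2v_1$). $G$ is a cyclic composition of $G_1,\dots,G_\ell$ ($\ell\ge 2$) on vertices $v_i\in V(G_i)$ if it is obtained from their disjoint union by adding the arcs $v_iv_{i+1}$ for $i=1,\dots,\ell-1$ and $v_\ell v_1$. A digraph $G$ is a $k$-tree if $\Delta_{max}(G)\le k$ and it can be built by the rules: every member of $\mathcal B_{k-1}$ is a $k$-tree; a direct or cyclic composition of $k$-trees is a $k$-tree. *)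

(* Finite digraphs are (T : finType, a : rel T). *)
From mathcomp Require Import all_boot.
Set Implicit Arguments. Unset Strict Implicit. Unset Printing Implicit Defensive.

Definition outdeg (T : finType) (a : rel T) (v : T) : nat := #|[set w | a v w]|.
Definition indeg (T : finType) (a : rel T) (v : T) : nat := #|[set w | a w v]|.
Definition dmin (T : finType) (a : rel T) (v : T) : nat := minn (outdeg a v) (indeg a v).
Definition Dmax (T : finType) (a : rel T) : nat :=
  \max_(v : T) maxn (outdeg a v) (indeg a v).

Definition diso (T : finType) (a : rel T) (U : finType) (b : rel U) : Prop :=
  exists f : T -> U, bijective f /\ forall x y, b (f x) (f y) = a x y.

(* directed cycle on n vertices (n >= 2; n = 2 is a digon) *)
Definition dcycle (n : nat) : rel 'I_n :=
  fun i j => val j == (val i).+1 %% n.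
Definition scycle (n : nat) : rel 'I_n :=
  fun i j => (val j == (val i).+1 %% n) || (val i == (val j).+1 %% n).
Definition scomplete (n : nat) : rel 'I_n := fun i j => i != j.
(* symmetric path of length n (n edges, n+1 vertices) *)
Definition spath (n : nat) : rel 'I_n.+1 :=
  fun i j => (val j == (val i).+1) || (val i == (val j).+1).

Arguments dcycle n : clear implicits.
Arguments scycle n : clear implicits.
Arguments scomplete n : clear implicits.
Arguments spath n : clear implicits.

Definition inB (j : nat) (T : finType) (a : rel T) : Prop :=
  if j == 1 then exists2 n : nat, 2 <= n & diso a (dcycle n)
  else if j == 2 then exists2 n : nat, (3 <= n) && odd n & diso a (scycle n)
  else (3 <= j) /\ diso a (scomplete j.+1).

(* direct composition: disjoint union plus one arc between v1 and v2,
   oriented v1 -> v2 if dir is true, v2 -> v1 otherwise *)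
Definition direct_rel (T1 T2 : finType) (a1 : rel T1) (a2 : rel T2)
  (v1 : T1) (v2 : T2) (dir : bool) : rel (T1 + T2)%type :=
  fun x y => match x, y with
  | inl x1, inl y1 => a1 x1 y1
  | inr x2, inr y2 => a2 x2 y2
  | inl x1, inr y2 => dir && (x1 == v1) && (y2 == v2)
  | inr x2, inl y1 => ~~ dir && (x2 == v2) && (y1 == v1)
  end.

(* cyclic composition of Ts 0, ..., Ts (l-1) on vertices vs i,
   adding arcs vs i -> vs (i+1 mod l) *)
Definition cyclic_rel (l : nat) (Ts : 'I_l -> finType)
  (as_ : forall i, rel (Ts i)) (vs : forall i, Ts i)
  : rel {i : 'I_l & Ts i} :=
  fun x y =>
    ((tag x == tag y) && as_ (tag x) (tagged x) (tagged_as x y))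
    || [&& tagged x == vs (tag x), tagged y == vs (tag y)
         & val (tag y) == (val (tag x)).+1 %% l].

Inductive ktree (k : nat) : forall T : finType, rel T -> Prop :=
| kt_base (T : finType) (a : rel T) :
    Dmax a <= k -> inB k.-1 a -> ktree k a
| kt_direct (T : finType) (a : rel T) (T1 T2 : finType) (a1 : rel T1) (a2 : rel T2)
    (v1 : T1) (v2 : T2) (dir : bool) :
    Dmax a <= k -> ktree k a1 -> ktree k a2 ->
    diso a (direct_rel a1 a2 v1 v2 dir) -> ktree k a
| kt_cyclic (T : finType) (a : rel T) (l : nat) (Ts : 'I_l -> finType)
    (as_ : forall i, rel (Ts i)) (vs : forall i, Ts i) :
    2 <= l -> Dmax a <= k -> (forall i, ktree k (as_ i)) ->
    diso a (cyclic_rel as_ vs) -> ktree k a.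

From mathcomp Require Import all_boot zify.
Set Implicit Arguments. Unset Strict Implicit. Unset Printing Implicit Defensive.

(* Proof by structural induction on the k-tree, carrying a stronger invariant.
   Call a vertex "low" if its mindegree is k-1.  The invariant [invariant k a]
   says: every out- and in-degree is at least k-1, and either there are at
   least k+1 low vertices, or there are at least k of them, every vertex is
   balanced (out-degree = in-degree) and the digraph is exceptional: an odd
   symmetric path when k = 2, the symmetric complete graph K_k when k >= 3.
   - The invariant is preserved by isomorphism and holds for the members of
     B_(k-1), which are regular of degree k-1.
   - Adding one arc at a vertex v of a digraph changes the degrees of v only,
     by one on one side: a balanced exceptional part keeps its k low vertices,
     any part keeps at least (number of low vertices - 1).  Hence a direct
     composition has at least 2k >= k+1 low vertices, and a cyclic composition
     of l parts at least l(k-1), which is >= k+1 except when k = 2 and every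
     part is an exceptional odd path; for l >= 3 there are still >= l low
     vertices, and for l = 2 the degree bound forces the two paths to be
     glued at endpoints, giving again an odd symmetric path. *)

Section Isomorphism.
Variables (T U : finType) (a : rel T) (b : rel U) (f : T -> U).
Hypothesis f_bij : bijective f.
Hypothesis f_hom : forall x y, b (f x) (f y) = a x y.

Lemma outdeg_iso x : outdeg a x = outdeg b (f x).
Proof.
rewrite /outdeg -(card_imset _ (bij_inj f_bij)); apply: eq_card => u.
case: (f_bij) => g fg gf.
by rewrite -(gf u) (mem_imset _ _ (bij_inj f_bij)) !inE f_hom.
Qed.

Lemma indeg_iso x : indeg a x = indeg b (f x).
Proof.
rewrite /indeg -(card_imset _ (bij_inj f_bij)); apply: eq_card => u.
case: (f_bij) => g fg gf.
by rewrite -(gf u) (mem_imset _ _ (bij_inj f_bij)) !inE f_hom.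
Qed.

Lemma card_dmin_iso m :
  #|[set v | dmin a v == m]| = #|[set u | dmin b u == m]|.
Proof.
rewrite -(card_imset _ (bij_inj f_bij)); apply: eq_card => u.
case: (f_bij) => g fg gf.
rewrite -(gf u) (mem_imset _ _ (bij_inj f_bij)) !inE.
by rewrite /dmin -outdeg_iso -indeg_iso.
Qed.

End Isomorphism.

Lemma diso_refl (T : finType) (a : rel T) : diso a a.
Proof. by exists id; split => //; exists id. Qed.

Lemma diso_trans (T U V : finType) (a : rel T) (b : rel U) (c : rel V) :
  diso a b -> diso b c -> diso a c.
Proof.
move=> [f [fb fh]] [g [gb gh]]; exists (g \o f); split; first exact: bij_comp.
by move=> x y /=; rewrite gh fh.
Qed.

Lemma Dmax_iso k (T U : finType) (a : rel T) (b : rel U) :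
  diso a b -> Dmax a <= k -> forall u, outdeg b u <= k /\ indeg b u <= k.
Proof.
move=> [f [fb fh]] D u; case: (fb) => g fg gf.
rewrite -(gf u) -(outdeg_iso fb fh) -(indeg_iso fb fh).
by have := leq_trans (leq_bigmax (g u)) D; rewrite geq_max => /andP.
Qed.

Lemma card_sum_split (T1 T2 : finType) (P : pred (T1 + T2)%type) :
  #|[set w | P w]| = #|[set x | P (inl x)]| + #|[set y | P (inr y)]|.
Proof. by rewrite -!sum1dep_card big_sumType. Qed.

Lemma card_sig_split (I : finType) (Ts : I -> finType) (P : pred {i : I & Ts i}) :
  #|[set w | P w]| = \sum_i #|[set x | P (@Tagged I i Ts x)]|.
Proof.
under eq_bigr => i _ do
  rewrite -(sum1dep_card (fun x : Ts i => P (Tagged Ts x))).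
rewrite -sum1dep_card (sig_big_dep (fun i => true)
  (fun i (x : Ts i) => P (@Tagged I i Ts x)) (fun i (x : Ts i) => 1)) /=.
by apply: eq_bigl => -[i x].
Qed.

Lemma card_guarded1 (T : finType) (c : bool) (v : T) :
  #|[set y | c && (y == v)]| = c.
Proof.
case: c => /=; last by apply: eq_card0 => y; rewrite inE.
by rewrite (_ : [set y | y == v] = [set v]) ?cards1 //; apply/setP => y; rewrite !inE.
Qed.

(* Labellings of a symmetric path of length n by 0, ..., n: this is how odd
   symmetric paths are handled, since labels compose well. *)
Definition path_labelling (T : finType) (a : rel T) (n : nat) (f : T -> nat) :=
  [/\ injective f, (forall x, f x <= n), (forall m, m <= n -> exists x, f x = m) &
    (forall x y, a x y = (f y == (f x).+1) || (f x == (f y).+1))].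

Definition odd_path (T : finType) (a : rel T) : Prop :=
  exists n (f : T -> nat), odd n /\ path_labelling a n f.

Lemma odd_path_iso (T U : finType) (a : rel T) (b : rel U) :
  diso a b -> odd_path b -> odd_path a.
Proof.
move=> [h [hb hh]] [n [g [on [gi gb gs gr]]]]; case: (hb) => h' hK h'K.
exists n, (g \o h); split => //; split => /=.
- exact: inj_comp gi (bij_inj hb).
- by move=> x; apply: gb.
- by move=> m /gs [y <-]; exists (h' y); rewrite h'K.
- by move=> x y; rewrite -hh gr.
Qed.

Lemma odd_path_spath (T : finType) (a : rel T) :
  odd_path a -> exists2 n, odd n & diso a (spath n).
Proof.
move=> [n [f [on [fi fb fs fr]]]]; exists n => //.
pose f' x := (inord (f x) : 'I_n.+1).
have f'E x : nat_of_ord (f' x) = f x by rewrite /f' inordK // ltnS.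
have f'i : injective f' by move=> x y E; apply: fi; rewrite -!f'E E.
have cardT : #|'I_n.+1| <= #|T|.
  rewrite -(card_codom f'i); apply: subset_leq_card; apply/subsetP => u _.
  have [x fx] := fs u (ltn_ord u).
  by apply/codomP; exists x; apply: val_inj => /=; rewrite f'E.
exists f'; split; first exact: inj_card_bij f'i cardT.
by move=> x y; rewrite /spath /= !f'E fr.
Qed.

Lemma path_labelling_flip (T : finType) (a : rel T) n f :
  path_labelling a n f -> path_labelling a n (fun x => n - f x).
Proof.
move=> [fi fb fs fr]; split.
- move=> x y /= E; apply: fi; have := fb x; have := fb y; lia.
- move=> x; lia.
- move=> m mn; have [x fx] := fs (n - m) (leq_subr _ _); exists x; lia.
- move=> x y; rewrite fr; have := fb x; have := fb y; lia.
Qed.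

(* Inner vertices of a path have out-degree 2. *)
Lemma path_labelling_end (T : finType) (a : rel T) n f v :
  path_labelling a n f -> outdeg a v <= 1 -> f v = 0 \/ f v = n.
Proof.
move=> [fi fb fs fr] od.
case: (f v =P 0) => [|h0]; first by left.
case: (f v =P n) => [|h1]; first by right.
have [y1 e1] := fs (f v).-1 (leq_trans (leq_pred _) (fb v)).
have [y2 e2] := fs (f v).+1 (ltac:(have := fb v; lia)).
have ne : y1 != y2 by apply/eqP => E; move: e1 e2; rewrite E; lia.
suff : 2 <= outdeg a v by lia.
rewrite /outdeg; apply: (@leq_trans #|[set y1; y2]|); first by rewrite cards2 ne.
apply: subset_leq_card; apply/subsetP => y.
by rewrite !inE => /orP [] /eqP ->; rewrite fr; lia.
Qed.

Lemma path_labelling_start (T : finType) (a : rel T) n f v :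
  path_labelling a n f -> outdeg a v <= 1 ->
  exists g, path_labelling a n g /\ g v = 0.
Proof.
move=> L od; have [f0|fn] := path_labelling_end L od; first by exists f.
by exists (fun x => n - f x); split; [exact: path_labelling_flip | lia].
Qed.

Definition low_count (k : nat) (T : finType) (a : rel T) : nat :=
  #|[set v | dmin a v == k.-1]|.

Definition exceptional (k : nat) (T : finType) (a : rel T) : Prop :=
  if k == 2 then odd_path a else diso a (scomplete k).

Definition invariant (k : nat) (T : finType) (a : rel T) : Prop :=
  (forall v, k.-1 <= outdeg a v /\ k.-1 <= indeg a v) /\
  (k.+1 <= low_count k a \/
   [/\ k <= low_count k a, (forall v, outdeg a v = indeg a v) & exceptional k a]).

Lemma invariant_iso k (T U : finType) (a : rel T) (b : rel U) :
  diso a b -> invariant k b -> invariant k a.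
Proof.
move=> D [deg_b low_b]; have [f [fb fh]] := D.
have lowE : low_count k a = low_count k b by rewrite /low_count (card_dmin_iso fb fh).
split; first by move=> v; rewrite (outdeg_iso fb fh) (indeg_iso fb fh).
rewrite lowE; case: low_b => [|[lowb balb excb]]; [by left | right; split => //].
  by move=> v; rewrite (outdeg_iso fb fh) (indeg_iso fb fh).
move: excb; rewrite /exceptional; case: (k == 2); first exact: odd_path_iso.
exact: diso_trans.
Qed.

(* In a (k-1)-regular digraph every vertex is low, so the invariant only asks
   for enough vertices. *)
Lemma regular_invariant k (T : finType) (a : rel T) :
  (forall v, outdeg a v = k.-1 /\ indeg a v = k.-1) ->
  k.+1 <= #|T| \/ (k <= #|T| /\ exceptional k a) -> invariant k a.
Proof.
move=> reg size_T.
have lowE : low_count k a = #|T|.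
  rewrite /low_count -cardsT; apply: eq_card => v; rewrite !inE /dmin.
  by have [-> ->] := reg v; rewrite minnn eqxx.
split; first by move=> v; have [-> ->] := reg v.
rewrite lowE; case: size_T => [|[? ?]]; [left | right] => //; split => // v.
by have [-> ->] := reg v.
Qed.

Lemma succ_mod l j : j < l -> j.+1 %% l = if j.+1 == l then 0 else j.+1.
Proof.
move=> jl; case: eqP => [->|ne]; first by rewrite modnn.
by rewrite modn_small //; lia.
Qed.

Lemma pred_mod l i : i < l -> (i + l.-1) %% l = if i == 0 then l.-1 else i.-1.
Proof.
move=> il; case: eqP => [->|ne]; first by rewrite add0n modn_small //; lia.
have -> : i + l.-1 = i.-1 + l by lia.
by rewrite modnDr modn_small //; lia.
Qed.

Lemma succ_modE l i j : 2 <= l -> i < l -> j < l ->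
  (i == j.+1 %% l) = (j == (i + l.-1) %% l).
Proof.
move=> l2 il jl; rewrite succ_mod // pred_mod //.
by case: (j.+1 =P l) => H1; case: (i =P 0) => H2; apply/eqP/eqP; lia.
Qed.

Lemma succ_mod_neq l i : 2 <= l -> i < l -> (i == i.+1 %% l) = false.
Proof. by move=> l2 il; rewrite succ_mod //; case: (i.+1 =P l) => H; apply/eqP; lia. Qed.

Lemma dcycle_deg n (v : 'I_n) :
  2 <= n -> outdeg (dcycle n) v = 1 /\ indeg (dcycle n) v = 1.
Proof.
move=> n2; have n0 : 0 < n by lia.
split.
  apply: (eq_card1 (x := Ordinal (ltn_pmod (val v).+1 n0))) => j.
  by rewrite !inE /dcycle -(inj_eq val_inj).
apply: (eq_card1 (x := Ordinal (ltn_pmod (val v + n.-1) n0))) => j.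
by rewrite !inE /dcycle -(inj_eq val_inj) /= succ_modE.
Qed.

Lemma scycle_deg n (v : 'I_n) :
  3 <= n -> outdeg (scycle n) v = 2 /\ indeg (scycle n) v = 2.
Proof.
move=> n3; have n0 : 0 < n by lia.
pose s := Ordinal (ltn_pmod (val v).+1 n0).
pose p := Ordinal (ltn_pmod (val v + n.-1) n0).
have sp : s != p.
  apply/eqP => /(congr1 (@nat_of_ord n)) /=; rewrite succ_mod // pred_mod //.
  by have := ltn_ord v; case: ifP; case: ifP; lia.
have out2 : outdeg (scycle n) v = 2.
  rewrite (_ : 2 = #|[set s; p]|); last by rewrite cards2 sp.
  apply: eq_card => j; rewrite !inE /scycle -!(inj_eq val_inj) /=.
  by rewrite [X in _ || X]succ_modE //; lia.
split => //; rewrite -out2; apply: eq_card => j.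
by rewrite !inE /scycle orbC.
Qed.

Lemma scomplete_deg n (v : 'I_n) :
  outdeg (scomplete n) v = n.-1 /\ indeg (scomplete n) v = n.-1.
Proof.
rewrite /outdeg /indeg /scomplete.
rewrite (_ : [set w | v != w] = ~: [set v]); last by apply/setP => w; rewrite !inE eq_sym.
rewrite (_ : [set w | w != v] = ~: [set v]); last by apply/setP => w; rewrite !inE.
by rewrite cardsC1 card_ord.
Qed.

(* Base case: the members of B_(k-1).  The only small ones are the digon (an
   odd path, k = 2) and the triangle K_3 (k = 3). *)
Lemma invariant_base k (T : finType) (a : rel T) :
  2 <= k -> inB k.-1 a -> invariant k a.
Proof.
case: k => [|[|[|[|k]]]] // _; rewrite /inB /=.
- case=> n n2 iso; apply: (invariant_iso iso); apply: regular_invariant.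
    by move=> v; exact: dcycle_deg.
  rewrite card_ord; have [n3|->] : 3 <= n \/ n = 2 by lia.
    by left.
  right; split => //; exists 1, (@nat_of_ord 2); split => //; split.
  + exact: val_inj.
  + by case=> m /= hm; lia.
  + by move=> m hm; exists (Ordinal (hm : m < 2)).
  + by case=> [[|[|?]] ?] [[|[|?]] ?].
- case=> n /andP [n3 on] iso; apply: (invariant_iso iso); apply: regular_invariant.
    by move=> v; exact: scycle_deg.
  rewrite card_ord; have [n4|->] : 4 <= n \/ n = 3.
    by move: n3 on; clear iso; case: n => [|[|[|[|[|]]]]]; lia.
    by left.
  right; split => //; exists id; split; first by exists id.
  by case=> [[|[|[|?]]] ?] [[|[|[|?]]] ?].
- case=> _ iso; apply: (invariant_iso iso); apply: regular_invariant.
    by move=> v; exact: scomplete_deg.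
  by rewrite card_ord; right; split => //; exact: diso_refl.
Qed.

Definition bumped_count (T : finType) (a : rel T) (v : T) (bo bi : bool) (m : nat) :=
  #|[set x | minn (outdeg a x + (bo && (x == v))) (indeg a x + (bi && (x == v))) == m]|.

Lemma bumped_count_ge (T : finType) (a : rel T) v bo bi m :
  #|[set x | dmin a x == m]| - 1 <= bumped_count a v bo bi m.
Proof.
rewrite (cardsD1 v) leq_subLR; apply: leq_add; first by case: (_ \in _).
apply: subset_leq_card; apply/subsetP => x; rewrite !inE => /andP [/negbTE xv].
by rewrite xv !andbF !addn0.
Qed.

(* One new arc at v keeps k low vertices in a digraph with the invariant: in
   the tight case v is balanced, so one side of it stays at k-1. *)
Lemma bumped_count_one_arc k (T : finType) (a : rel T) v bo bi :
  invariant k a -> ~~ (bo && bi) -> k <= bumped_count a v bo bi k.-1.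
Proof.
move=> [deg [many|[low bal _]]] one.
  by apply: leq_trans (bumped_count_ge a v bo bi k.-1); rewrite /low_count in many; lia.
apply: leq_trans low _; apply: subset_leq_card; apply/subsetP => x; rewrite !inE /dmin.
have := bal x; move: one; case: bo; case: bi; case: (x == v) => //=; lia.
Qed.

Section DirectComposition.
Variables (T1 T2 : finType) (a1 : rel T1) (a2 : rel T2) (v1 : T1) (v2 : T2).
Variable dir : bool.
Let R := direct_rel a1 a2 v1 v2 dir.

Lemma outdeg_inl x : outdeg R (inl x) = outdeg a1 x + (dir && (x == v1)).
Proof.
rewrite /outdeg card_sum_split -(card_guarded1 (dir && (x == v1)) v2).
by congr (_ + _); apply: eq_card => y; rewrite !inE /R /=; case: dir; rewrite //= andbC.
Qed.

Lemma indeg_inl x : indeg R (inl x) = indeg a1 x + (~~ dir && (x == v1)).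
Proof.
rewrite /indeg card_sum_split -(card_guarded1 (~~ dir && (x == v1)) v2).
by congr (_ + _); apply: eq_card => y; rewrite !inE /R /=; case: dir; rewrite //= andbC.
Qed.

Lemma outdeg_inr x : outdeg R (inr x) = outdeg a2 x + (~~ dir && (x == v2)).
Proof.
rewrite /outdeg card_sum_split addnC -(card_guarded1 (~~ dir && (x == v2)) v1).
by congr (_ + _); apply: eq_card => y; rewrite !inE /R /=; case: dir; rewrite //= andbC.
Qed.

Lemma indeg_inr x : indeg R (inr x) = indeg a2 x + (dir && (x == v2)).
Proof.
rewrite /indeg card_sum_split addnC -(card_guarded1 (dir && (x == v2)) v1).
by congr (_ + _); apply: eq_card => y; rewrite !inE /R /=; case: dir; rewrite //= andbC.
Qed.

Lemma low_inl m :
  #|[set x | dmin R (inl x) == m]| = bumped_count a1 v1 dir (~~ dir) m.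
Proof. by apply: eq_card => x; rewrite !inE /dmin outdeg_inl indeg_inl. Qed.

Lemma low_inr m :
  #|[set x | dmin R (inr x) == m]| = bumped_count a2 v2 (~~ dir) dir m.
Proof. by apply: eq_card => x; rewrite !inE /dmin outdeg_inr indeg_inr. Qed.

(* Each part keeps k low vertices, so there are 2k >= k+1 of them. *)
Lemma invariant_direct k :
  2 <= k -> invariant k a1 -> invariant k a2 -> invariant k R.
Proof.
move=> k2 I1 I2; split.
  case=> x; rewrite ?outdeg_inl ?indeg_inl ?outdeg_inr ?indeg_inr.
    by have [] := I1.1 x; lia.
  by have [] := I2.1 x; lia.
have low1 : k <= bumped_count a1 v1 dir (~~ dir) k.-1.
  by apply: bumped_count_one_arc; rewrite ?andbN.
have low2 : k <= bumped_count a2 v2 (~~ dir) dir k.-1.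
  by apply: bumped_count_one_arc; rewrite ?andNb.
by left; rewrite /low_count card_sum_split low_inl low_inr; lia.
Qed.

End DirectComposition.

Section CyclicComposition.
Variables (l : nat) (Ts : 'I_l -> finType) (as_ : forall i, rel (Ts i)).
Variable vs : forall i, Ts i.
Hypothesis l2 : 2 <= l.
Let R := cyclic_rel as_ vs.

Let l0 : 0 < l. Proof. exact: leq_trans l2. Qed.

Definition succ_part (i : 'I_l) : 'I_l := Ordinal (ltn_pmod (val i).+1 l0).
Definition pred_part (i : 'I_l) : 'I_l := Ordinal (ltn_pmod (val i + l.-1) l0).

Lemma sum_over_others (i s : 'I_l) (c : bool) :
  s != i -> \sum_(j | j != i) (c && (j == s)) = c.
Proof.
move=> si; rewrite (bigD1 s) //= eqxx andbT big1 ?addn0 // => j /andP [_ /negbTE ->].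
by rewrite andbF.
Qed.

Lemma outdeg_cyclic i (x : Ts i) :
  outdeg R (Tagged Ts x) = outdeg (@as_ i) x + (x == @vs i).
Proof.
rewrite /outdeg card_sig_split (bigD1 i) //=; congr (_ + _).
  apply: eq_card => y; rewrite !inE /R /cyclic_rel /= eqxx tagged_asE /=.
  by rewrite succ_mod_neq // !andbF orbF.
rewrite -(@sum_over_others i (succ_part i) (x == @vs i)); last first.
  by apply/negP => /eqP /(congr1 val) /= /esym /eqP; rewrite succ_mod_neq.
apply: eq_bigr => j ji; rewrite -(card_guarded1 _ (@vs j)); apply: eq_card => y.
rewrite !inE /R /cyclic_rel /= eq_sym (negbTE ji) /=.
have -> : (j == succ_part i) = (val j == (val i).+1 %% l) by [].
by case: (x == @vs i); case: (y == @vs j); rewrite //= andbC.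
Qed.

Lemma indeg_cyclic i (x : Ts i) :
  indeg R (Tagged Ts x) = indeg (@as_ i) x + (x == @vs i).
Proof.
rewrite /indeg card_sig_split (bigD1 i) //=; congr (_ + _).
  apply: eq_card => y; rewrite !inE /R /cyclic_rel /= eqxx tagged_asE /=.
  by rewrite succ_mod_neq // !andbF orbF.
rewrite -(@sum_over_others i (pred_part i) (x == @vs i)); last first.
  apply/negP => /eqP /(congr1 val) /= /esym /eqP.
  by rewrite -succ_modE ?succ_mod_neq.
apply: eq_bigr => j ji; rewrite -(card_guarded1 _ (@vs j)); apply: eq_card => y.
rewrite !inE /R /cyclic_rel /= (negbTE ji) /=.
have -> : (j == pred_part i) = (val i == (val j).+1 %% l) by rewrite succ_modE //=; apply: ltn_ord.
by case: (x == @vs i); case: (y == @vs j); rewrite //= andbC.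
Qed.

Lemma low_count_cyclic k :
  low_count k R = \sum_i bumped_count (@as_ i) (@vs i) true true k.-1.
Proof.
rewrite /low_count card_sig_split; apply: eq_bigr => i _; apply: eq_card => x.
by rewrite !inE /dmin outdeg_cyclic indeg_cyclic.
Qed.

End CyclicComposition.

Lemma ord2_dep_ind (Ts : 'I_2 -> finType) (P : forall i, Ts i -> Prop) :
  (forall x : Ts ord0, P ord0 x) -> (forall x : Ts ord_max, P ord_max x) ->
  forall i x, P i x.
Proof.
move=> H0 H1 [[|[|m]] Hm] x.
- by rewrite (bool_irrelevance Hm (ltn0Sn 1)) in x *.
- by rewrite (bool_irrelevance Hm (ltnSn 1)) in x *.
- by [].
Qed.

Lemma path_labelling_cyclic2 (Ts : 'I_2 -> finType) (as_ : forall i, rel (Ts i))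
    (vs : forall i, Ts i) n0 n1 f0 f1 :
  path_labelling (as_ ord0) n0 f0 -> f0 (vs ord0) = n0 ->
  path_labelling (as_ ord_max) n1 f1 -> f1 (vs ord_max) = 0 ->
  exists g, path_labelling (cyclic_rel as_ vs) (n0 + n1).+1 g.
Proof.
move=> [i0 b0 s0 r0] e0 [i1 b1 s1 r1] e1.
pose g (w : {i : 'I_2 & Ts i}) :=
  if tag w == ord0 then f0 (tagged_as (Tagged Ts (vs ord0)) w)
  else n0.+1 + f1 (tagged_as (Tagged Ts (vs ord_max)) w).
have g0 (x : Ts ord0) : g (Tagged Ts x) = f0 x by rewrite /g /= tagged_asE.
have g1 (x : Ts ord_max) : g (Tagged Ts x) = n0.+1 + f1 x by rewrite /g /= tagged_asE.
exists g; split.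
- case=> i x [j y]; move: i x; apply: ord2_dep_ind => x;
    move: j y; apply: ord2_dep_ind => y; rewrite ?g0 ?g1.
  + by move/i0 => ->.
  + by have := b0 x; lia.
  + by have := b0 y; lia.
  + by move=> E; have -> : y = x by apply: i1; lia.
- case=> i x; move: i x; apply: ord2_dep_ind => x; rewrite ?g0 ?g1.
  + by have := b0 x; lia.
  + by have := b1 x; lia.
- move=> m mN; case: (leqP m n0) => mn.
    by have [x hx] := s0 m mn; exists (Tagged Ts x); rewrite g0.
  have [x hx] := s1 (m - n0.+1) ltac:(lia); exists (Tagged Ts x); rewrite g1; lia.
- case=> i x [j y]; move: i x; apply: ord2_dep_ind => x;
    move: j y; apply: ord2_dep_ind => y; rewrite ?g0 ?g1 /cyclic_rel /=.
  + by rewrite tagged_asE r0 (_ : (0 == 1 %% 2) = false) // !andbF orbF; lia.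
  + by rewrite -(inj_eq i0) e0 -(inj_eq i1) e1; have := b0 x; lia.
  + by rewrite -(inj_eq i0) e0 -(inj_eq i1) e1; have := b0 y; lia.
  + by rewrite tagged_asE r1 (_ : (1 == 2 %% 2) = false) // !andbF orbF; lia.
Qed.

Lemma odd_path_cyclic2 (Ts : 'I_2 -> finType) (as_ : forall i, rel (Ts i))
    (vs : forall i, Ts i) :
  (forall i, odd_path (as_ i)) -> (forall i, outdeg (as_ i) (vs i) <= 1) ->
  odd_path (cyclic_rel as_ vs).
Proof.
move=> P deg1.
have [n0 [f0 [o0 L0]]] := P ord0; have [n1 [f1 [o1 L1]]] := P ord_max.
have [h0 [L0' e0]] := path_labelling_start L0 (deg1 ord0).
have [h1 [L1' e1]] := path_labelling_start L1 (deg1 ord_max).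
have end0 : n0 - h0 (vs ord0) = n0 by rewrite e0 subn0.
have [g Lg] := path_labelling_cyclic2 (path_labelling_flip L0') end0 L1' e1.
by exists (n0 + n1).+1, g; split => //=; rewrite oddD o0 o1.
Qed.

(* Each part of a cyclic composition keeps at least k-1 low vertices; this
   suffices unless k = 2 and all parts are exceptional, and then the degree
   bound k = 2 makes the case l = 2 an odd path again. *)
Lemma invariant_cyclic k l (Ts : 'I_l -> finType) (as_ : forall i, rel (Ts i))
    (vs : forall i, Ts i) :
  2 <= k -> 2 <= l -> (forall i, invariant k (as_ i)) ->
  (forall w, outdeg (cyclic_rel as_ vs) w <= k) ->
  invariant k (cyclic_rel as_ vs).
Proof.
move=> k2 l2 inv deg_le.
have outdegE := outdeg_cyclic as_ vs l2; have indegE := indeg_cyclic as_ vs l2.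
split.
  by case=> i x; rewrite outdegE indegE; have [] := (inv i).1 x; lia.
pose t i := bumped_count (as_ i) (vs i) true true k.-1.
have low_k i : k <= #|[set v | dmin (as_ i) v == k.-1]|.
  by case: (inv i) => _ [|[]]; rewrite /low_count; lia.
have low_part i : k.-1 <= t i.
  by rewrite /t; have := bumped_count_ge (as_ i) (vs i) true true k.-1; have := low_k i; lia.
have low_sum : l * k.-1 <= \sum_i t i.
  rewrite -[l in l * _]card_ord -sum_nat_const; exact: leq_sum.
have -> : low_count k (cyclic_rel as_ vs) = \sum_i t i by exact: low_count_cyclic.
have [k3|k_eq2] : 3 <= k \/ k = 2 by lia.
  by left; nia.
subst k.
(* k = 2: a part with at least 3 low vertices supplies the missing one. *)
case: (boolP [exists i, 3 <= low_count 2 (as_ i)]) => [/existsP [i0 rich_i0]|no_rich].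
  left; apply: leq_trans (_ : \sum_(i < l) (1 + (i == i0)) <= _).
    rewrite big_split /= sum_nat_const card_ord (bigD1 i0) //= eqxx big1 => [|j /negbTE -> //].
    lia.
  apply: leq_sum => i _; case: eqP => [->|_]; last exact: low_part.
  by rewrite /t /=; have := bumped_count_ge (as_ i0) (vs i0) true true 1; rewrite /low_count /= in rich_i0; lia.
have tight i : [/\ 2 <= low_count 2 (as_ i),
    (forall v, outdeg (as_ i) v = indeg (as_ i) v) & exceptional 2 (as_ i)].
  case: (inv i) => _ [many|//].
  by move: no_rich; rewrite negb_exists => /forallP /(_ i); rewrite many.
(* Otherwise every part is a balanced odd path with 2 low vertices. *)
have [l3|l_eq2] : 3 <= l \/ l = 2 by lia.
  by left; nia.
right; split; first lia.
  by case=> i x; rewrite outdegE indegE; case: (tight i) => _ ->.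
subst l; apply: odd_path_cyclic2; first by move=> i; case: (tight i).
by move=> i; have := deg_le (Tagged Ts (vs i)); rewrite outdegE eqxx; lia.
Qed.

Lemma ktree_invariant k (T : finType) (a : rel T) :
  2 <= k -> ktree k a -> invariant k a.
Proof.
move=> k2; elim => {T a}.
- by move=> T a _; apply: invariant_base.
- move=> T a T1 T2 a1 a2 v1 v2 dir _ _ I1 _ I2 iso.
  exact: (invariant_iso iso (invariant_direct v1 v2 dir k2 I1 I2)).
- move=> T a l Ts as_ vs l2 D _ IH iso.
  apply: (invariant_iso iso (invariant_cyclic k2 l2 IH _)) => w.
  by have [] := Dmax_iso iso D w.
Qed.

Theorem mainTheorem4 (k : nat) (T : finType) (a : rel T) :
  2 <= k -> ktree k a ->
  (forall v : T, k.-1 <= dmin a v) /\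
  (~ diso a (scomplete k) ->
   ~ (exists2 n : nat, odd n & diso a (spath n)) ->
   k.+1 <= #|[set v : T | dmin a v == k.-1]|).
Proof.
move=> k2 tree; have [deg low] := ktree_invariant k2 tree; split.
  by move=> v; rewrite /dmin leq_min; have [-> ->] := deg v.
move=> not_complete not_path; case: low => [//|[_ _]].
rewrite /exceptional; case: ifP => _ exc; last by case: not_complete.
by case: not_path; apply: odd_path_spath.
Qed.
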